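(* Let $n\ge 4$ be an integer. If $k$ is a positive integer satisfying $$\binom{(k-1)-\lfloor \frac{(n-1)^3}{2}\rfloor-1}{\lfloor\frac{(n-1)^3-1}{2}\rfloor}+\binom{(k-1)-\lfloor \frac{(n-1)^3-1}{2}\rfloor-1}{\lfloor\frac{(n-1)^3}{2}\rfloor}<n^3\le \binom{k-\lfloor \frac{(n-1)^3}{2}\rfloor-1}{\lfloor\frac{(n-1)^3-1}{2}\rfloor}+\binom{k-\lfloor \frac{(n-1)^3-1}{2}\rfloor-1}{\lfloor\frac{(n-1)^3}{2}\rfloor},$$ then $k=(n-1)^3+2$.
   Context: For integers $a$ and $b\ge 0$, $\binom{a}{b}$ denotes the usual binomial coefficient, taken to be $0$ when $a<b$. *)

From mathcomp Require Import all_boot all_order all_algebra.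
Set Implicit Arguments. Unset Strict Implicit. Unset Printing Implicit Defensive.
Import Order.TTheory GRing.Theory Num.Theory.

(* Binomial coefficient with integer top a and natural bottom b:
   'C(a, b) for a >= 0, and 0 when a < 0 (then a < b since b >= 0). *)
Definition binZ (a : int) (b : nat) : nat :=
  match a with
  | Posz a' => 'C(a', b)
  | Negz _ => 0
  end.

From mathcomp Require Import all_boot all_order all_algebra.
From mathcomp Require Import zify.
Set Implicit Arguments. Unset Strict Implicit. Unset Printing Implicit Defensive.
Import Order.TTheory GRing.Theory Num.Theory.

(* Put m = (n-1)^3, a = m %/ 2, b = (m-1) %/ 2, so a + b = m - 1.  Both sides
   of the hypothesis are values of the nondecreasing function
   x |-> C(x-a-1, b) + C(x-b-1, a), at k - 1 and at k.  At m + 1 it equals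
   C(b+1, b) + C(a+1, a) = m + 1 < n^3, and at m + 2 it equals
   C(b+2, b) + C(a+2, a) >= m^2/4 >= n^3.  A nondecreasing function crosses a
   threshold between consecutive arguments only once, so k = m + 2. *)

Lemma binZ_homo (c : nat) : {homo binZ^~ c : x y / (x <= y)%R >-> x <= y}.
Proof. by case=> [x|x] [y|y] //=; rewrite lez_nat => /leq_bin2l. Qed.

Lemma binSSn_mul2 (n : nat) : 'C(n.+2, n) * 2 = n.+2 * n.+1.
Proof.
have -> : 'C(n.+2, n) = 'C(n.+2, n.+2 - 2) by rewrite subn2.
by rewrite bin_sub //  (bin_ffact _ 2) !ffactSS ffactn0 muln1.
Qed.

Lemma sqr_le_8binSSn (m a : nat) : m <= 2 * a.+1 -> m ^ 2 <= 8 * 'C(a.+2, a).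
Proof.
move=> le_m_2a; have := binSSn_mul2 a.
have := leq_mul le_m_2a le_m_2a; rewrite -mulnn; nia.
Qed.

Lemma cube_le_sqr_cube (m : nat) : 3 <= m -> 4 * m.+1 ^ 3 <= (m ^ 3) ^ 2.
Proof.
move=> m_ge3; have le_2m_sqr : 2 * m.+1 <= m ^ 2 by nia.
rewrite -(leq_exp2r _ _ (_ : 0 < 3)) // in le_2m_sqr.
move: le_2m_sqr; rewrite -!expnM expnMn mulnC expnM; lia.
Qed.

Lemma nondecreasing_threshold_unique (f : int -> nat) (t : nat) (x y : int) :
  {homo f : u v / (u <= v)%R >-> u <= v} ->
  f (x - 1)%R < t <= f x -> f (y - 1)%R < t <= f y -> x = y.
Proof.
move=> f_homo /andP[fx_lt fx_ge] /andP[fy_lt fy_ge].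
have le_crossing u v : f (u - 1)%R < t -> t <= f v -> (u <= v)%R.
  move=> fu_lt fv_ge; rewrite leNgt; apply/negP => lt_vu.
  have := f_homo v (u - 1)%R; lia.
by apply/eqP; rewrite eq_le !le_crossing.
Qed.

Lemma cube_add1_lt (m : nat) : 0 < m -> m ^ 3 + 1 < m.+1 ^ 3.
Proof. by move=> m_gt0; rewrite -addn1 !expnS expn0; nia. Qed.

Definition binsum (a b : nat) (x : int) : nat :=
  binZ (x - a%:Z - 1)%R b + binZ (x - b%:Z - 1)%R a.

Lemma binsum_homo (a b : nat) : {homo binsum a b : x y / (x <= y)%R >-> x <= y}.
Proof. by move=> x y le_xy; apply: leq_add; apply: binZ_homo; lia. Qed.

Lemma binsum_add2 (a b : nat) : binsum a b (a + b + 2)%:Z = a + b + 2.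
Proof.
rewrite /binsum.
have -> : ((a + b + 2)%:Z - a%:Z - 1 = b.+1)%R by lia.
have -> : ((a + b + 2)%:Z - b%:Z - 1 = a.+1)%R by lia.
by rewrite /= !binSn; lia.
Qed.

Lemma binsum_add3 (a b : nat) :
  binsum a b (a + b + 3)%:Z = 'C(b.+2, b) + 'C(a.+2, a).
Proof.
rewrite /binsum.
have -> : ((a + b + 3)%:Z - a%:Z - 1 = b.+2)%R by lia.
by have -> : ((a + b + 3)%:Z - b%:Z - 1 = a.+2)%R by lia.
Qed.

Theorem proposition6 (n k : nat) (hn : 4 <= n) (hk : 0 < k) :
  binZ ((k%:Z - 1) - (((n - 1) ^ 3) %/ 2)%:Z - 1)%R (((n - 1) ^ 3 - 1) %/ 2)
  + binZ ((k%:Z - 1) - ((((n - 1) ^ 3) - 1) %/ 2)%:Z - 1)%R (((n - 1) ^ 3) %/ 2)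
  < n ^ 3 <=
  binZ (k%:Z - (((n - 1) ^ 3) %/ 2)%:Z - 1)%R (((n - 1) ^ 3 - 1) %/ 2)
  + binZ (k%:Z - ((((n - 1) ^ 3) - 1) %/ 2)%:Z - 1)%R (((n - 1) ^ 3) %/ 2) ->
  k = (n - 1) ^ 3 + 2.
Proof.
set m := (n - 1) ^ 3; set a := m %/ 2; set b := (m - 1) %/ 2.
have ->: n = (n - 1).+1 by lia.
have [le_m_2a le_m_2b] : m <= 2 * a.+1 /\ m <= 2 * b.+1 by split; lia.
have below : binsum a b ((m + 2)%:Z - 1)%R < (n - 1).+1 ^ 3.
  rewrite (_ : (_ - 1 = (a + b + 2)%:Z)%R) ?binsum_add2; last by lia.
  have := @cube_add1_lt (n - 1); lia.
have above : (n - 1).+1 ^ 3 <= binsum a b (m + 2)%:Z.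
  rewrite (_ : m + 2 = a + b + 3) ?binsum_add3; last by lia.
  have := sqr_le_8binSSn le_m_2a; have := sqr_le_8binSSn le_m_2b.
  have := @cube_le_sqr_cube (n - 1); lia.
move=> crossing_k; suff: Posz k = Posz (m + 2) by case.
by apply: nondecreasing_threshold_unique (binsum_homo a b) crossing_k _; rewrite below above.
Qed.
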